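(* Let $\epsilon>0$ and $\alpha>0$ be constants. There exists a constant $\delta>0$ such that, for all sufficiently large $n$, if $V\subseteq\mathbb{Z}_2^{2n}$ is a uniformly random subspace of dimension $m\ge\alpha n$, then $\Pr[\dim(\mathrm{rad}(V))\ge\epsilon n]\le2^{-\delta n^2}$.
   Context: Symplectic inner product on $\mathbb{Z}_2^{2n}$: $(\mathbf a,\mathbf b)\odot(\mathbf a',\mathbf b')=\mathbf a\cdot\mathbf b'+\mathbf a'\cdot\mathbf b\pmod2$. For a subspace $V$, $V^\perp=\{\mathbf v:\mathbf v\odot\mathbf w=0\ \forall\mathbf w\in V\}$, and the radical is $\mathrm{rad}(V):=V\cap V^\perp$. *)

From HB Require Import structures.
From mathcomp Require Import all_boot all_order all_algebra.
From mathcomp Require Import reals exp.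
Set Implicit Arguments. Unset Strict Implicit. Unset Printing Implicit Defensive.
Import Order.TTheory GRing.Theory Num.Theory.
Local Open Scope ring_scope.

(* Vectors of Z_2^{2n}: row vectors of length n + n over F_2; the first n
   coordinates are the "a" part, the last n the "b" part. *)
Notation vec n := 'rV['F_2]_(n + n).

(* Symplectic inner product (a,b).(a',b') = a.b' + a'.b (mod 2). *)
Definition sympl (n : nat) (v w : vec n) : 'F_2 :=
  \sum_(i < n) (v 0 (lshift n i) * w 0 (rshift n i)
                + w 0 (lshift n i) * v 0 (rshift n i)).

Definition spanS (n : nat) (V : {set vec n}) : {vspace vec n} := <<enum V>>%VS.

Definition is_subspace (n : nat) (V : {set vec n}) : bool :=
  V == [set v | v \in spanS V].

Definition sdim (n : nat) (V : {set vec n}) : nat := \dim (spanS V).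

Definition sperp (n : nat) (V : {set vec n}) : {set vec n} :=
  [set v | [forall w in V, sympl v w == 0]].
Definition rad (n : nat) (V : {set vec n}) : {set vec n} := V :&: sperp V.

Definition subspaces_dim (n m : nat) : {set {set vec n}} :=
  [set V : {set vec n} | is_subspace V && (sdim V == m)].

Definition prob_big_rad (R : realType) (eps : R) (n m : nat) : R :=
  (#|[set V in subspaces_dim n m | eps * n%:R <= (sdim (rad V))%:R]|%:R
   / #|subspaces_dim n m|%:R).

From Pilot Require Import Defs.
From HB Require Import structures.
From mathcomp Require Import all_boot all_order all_algebra finfield mxabelem.
From mathcomp Require Import reals exp.
From mathcomp Require Import zify.
From mathcomp.algebra_tactics Require Import ring lra.
Set Implicit Arguments. Unset Strict Implicit. Unset Printing Implicit Defensive.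
Import Order.TTheory GRing.Theory Num.Theory.

(* Count ordered bases.  There are at least 2^(m(2n-1)) independent m-tuples
   and every m-dimensional subspace has at most 2^(m^2) ordered bases, which
   bounds the number of subspaces from below.  If dim rad(V) >= k, then V has
   at least 2^(k^2 + (m-k)m - m) ordered bases whose first k vectors lie in
   rad(V); in each of them the j-th vector is orthogonal to the first min(j,k)
   ones.  As the symplectic form is nondegenerate, the orthogonal complement of
   i independent vectors has 2^(2n-i) elements, so there are at most
   2^(2nm - sum_j min(j,k)) such tuples in total.  Comparing the two counts
   gives Pr[dim rad(V) >= k] <= 2^(2m - C(k,2)), and C(eps n, 2) dominates
   2m <= 4n. *)


Lemma sum_nat_const_seq (I : Type) (r : seq I) c : \sum_(i <- r) c = size r * c.
Proof. by rewrite big_const_seq count_predT iter_addn_0 mulnC. Qed.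

Section Admissible.
Variable T : finType.
Implicit Types (P Q : seq T -> T -> bool) (s : seq T).

(* Sequences grow at the head: [P s x] allows extending [s] to [x :: s]. *)
Fixpoint admissible P s : bool :=
  if s is x :: s' then P s' x && admissible P s' else true.

Fixpoint admissibles P j : seq (seq T) :=
  if j is j'.+1 then
    [seq x :: s | s <- admissibles P j', x <- [seq y <- enum T | P s y]]
  else [:: [::]].

Lemma mem_admissibles P j s :
  (s \in admissibles P j) = admissible P s && (size s == j).
Proof.
elim: j s => [|j IH] s /=; first by case: s => [|x s]; rewrite inE ?andbF.
apply/allpairsPdep/idP => [[s' [y [s's' ys' ->]]]|].
  move: s's' ys'; rewrite IH mem_filter => /andP[adm_s' /eqP <-] /andP[Ps'y _].
  by rewrite /= Ps'y adm_s' eqxx.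
case: s => [|x s] //= /andP[/andP[Psx adm_s] size_s]; exists s, x.
by rewrite IH mem_filter Psx mem_enum adm_s.
Qed.

Lemma admissibles_uniq P j : uniq (admissibles P j).
Proof.
elim: j => [|j IH] //=; apply: allpairs_uniq_dep => //.
  by move=> s _; exact/filter_uniq/enum_uniq.
by move=> [s x] [s' x'] _ _ [-> ->].
Qed.

Lemma size_admissiblesS P j :
  size (admissibles P j.+1) = \sum_(s <- admissibles P j) #|[pred y | P s y]|.
Proof.
rewrite /= size_allpairs_dep sumnE big_map; apply: eq_bigr => s _.
rewrite cardE /enum_mem !size_filter count_filter.
by apply: eq_count => y /=; rewrite andbT.
Qed.

Lemma size_admissibles_ub P (a b : nat -> nat) m :
  (forall j s, j < m -> s \in admissibles P j -> a j * #|[pred y | P s y]| <= b j) ->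
  size (admissibles P m) * \prod_(j < m) a j <= \prod_(j < m) b j.
Proof.
elim: m => [|m IH] step; first by rewrite !big_ord0.
rewrite !big_ord_recr /= size_admissiblesS big_distrl /=.
apply: (@leq_trans (\sum_(s <- admissibles P m) \prod_(j < m) a j * b m)).
  rewrite !big_seq; apply: leq_sum => s adm_s.
  by rewrite mulnCA leq_mul2l mulnC step ?orbT.
rewrite -big_distrl sum_nat_const_seq leq_mul2r IH ?orbT //.
by move=> j s /ltnW; apply: step.
Qed.

Lemma size_admissibles_lb P (a b : nat -> nat) m :
  (forall j s, j < m -> s \in admissibles P j -> b j <= a j * #|[pred y | P s y]|) ->
  \prod_(j < m) b j <= size (admissibles P m) * \prod_(j < m) a j.
Proof.
elim: m => [|m IH] step; first by rewrite !big_ord0.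
rewrite !big_ord_recr /= size_admissiblesS big_distrl /=.
apply: (@leq_trans (\sum_(s <- admissibles P m) \prod_(j < m) a j * b m)).
  rewrite -big_distrl sum_nat_const_seq leq_mul2r IH ?orbT //.
  by move=> j s /ltnW; apply: step.
rewrite !big_seq; apply: leq_sum => s adm_s.
by rewrite mulnCA leq_mul2l mulnC step ?orbT.
Qed.

Lemma admissibleW P Q s :
  (forall s' x, admissible P s' -> P s' x -> Q s' x) ->
  admissible P s -> admissible Q s.
Proof.
move=> PQ; elim: s => [|x s IH] //= /andP[Psx adm_s].
by rewrite PQ ?IH.
Qed.

Lemma admissible_all (q : pred T) s : admissible (fun _ => q) s = all q s.
Proof. by elim: s => //= x s ->. Qed.

Lemma admissible_drop P i s : admissible P s -> admissible P (drop i s).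
Proof.
elim: s i => [|x s IH] [|i] //= /andP[_]; exact: IH.
Qed.

End Admissible.

Section DoubleCounting.
Variables (I : eqType) (U : finType) (f : I -> U).

Lemma sum_count_fibres (B : {pred U}) (l : seq I) :
  \sum_(V in B) count (fun i => f i == V) l = count (fun i => f i \in B) l.
Proof.
elim: l => [|i l IH] /=; first by rewrite big1.
rewrite big_split /= IH; congr (_ + _).
have [fiB|fiNB] := boolP (f i \in B).
  rewrite (bigD1 (f i)) //= eqxx big1 // => V /andP[_ VNfi].
  by rewrite eq_sym (negbTE VNfi).
by rewrite big1 // => V VB; case: eqP => // fiV; rewrite fiV VB in fiNB.
Qed.

Lemma card_mul_le_size (B : {pred U}) (l : seq I) c d :
  (forall V, V \in B -> c <= d * count (fun i => f i == V) l) ->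
  #|B| * c <= d * size l.
Proof.
move=> fibre; rewrite -sum_nat_const.
apply: (@leq_trans (\sum_(V in B) d * count (fun i => f i == V) l)).
  exact: leq_sum.
by rewrite -big_distrr sum_count_fibres leq_mul2l count_size orbT.
Qed.

Lemma size_le_card_mul (B : {pred U}) (l : seq I) c :
  {in l, forall i, f i \in B} ->
  (forall V, V \in B -> count (fun i => f i == V) l <= c) ->
  size l <= #|B| * c.
Proof.
move=> lB fibre; rewrite -sum_nat_const -count_predT -(eq_in_count lB).
by rewrite -sum_count_fibres leq_sum.
Qed.

End DoubleCounting.

Section RowSpaces.
Local Open Scope ring_scope.

Lemma free_row_free (F : fieldType) p (t : seq 'rV[F]_p) :
  free t -> row_free (\matrix_(i < size t) t`_i).
Proof.
move=> /(@freeP _ _ _ (in_tuple t)) t_free.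
rewrite -kermx_eq0 -submx0; apply/rV_subP => v.
rewrite sub_kermx mulmx_sum_row submx0 => /eqP v_ker.
apply/eqP/rowP => i; rewrite mxE; apply: t_free i.
by rewrite -[RHS]v_ker; apply: eq_bigr => j _; rewrite rowK.
Qed.

Lemma card_kermx (F : finFieldType) p q (M : 'M[F]_(p, q)) :
  #|[pred x : 'rV_p | x *m M == 0]| = (#|F| ^ (p - \rank M))%N.
Proof.
by rewrite -mxrank_ker -card_rowg; apply: eq_card => x; rewrite mem_rowg sub_kermx.
Qed.

End RowSpaces.

Section SymplecticSpace.
Variable n : nat.
Local Open Scope ring_scope.
Local Notation N := (n + n)%N.
Implicit Types (x y : vec n) (t : seq (vec n)).

Definition sympl_mx : 'M['F_2]_N := block_mx 0 1%:M 1%:M 0.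

Lemma sympl_mx_free : row_free sympl_mx.
Proof.
apply/row_freeP; exists sympl_mx.
by rewrite mulmx_block !mulmx0 !mulmx1 !addr0 !add0r -scalar_mx_block.
Qed.

Lemma symplE x y : sympl x y = (x *m (y *m sympl_mx)^T) 0 0.
Proof.
have -> : y *m sympl_mx = row_mx (rsubmx y) (lsubmx y).
  by rewrite -{1}[y]hsubmxK mul_row_block !mulmx0 !mulmx1 add0r addr0.
rewrite tr_row_mx -[x in RHS]hsubmxK mul_row_col mxE !mxE /sympl -big_split.
by apply: eq_bigr => i _; rewrite !mxE [y 0 _ * _]mulrC.
Qed.

Lemma sympl_sym x y : sympl x y = sympl y x.
Proof. by apply: eq_bigr => i _; rewrite addrC. Qed.

Lemma sympl_spanl (X : seq (vec n)) y :
  {in X, forall x, sympl x y = 0} -> {in <<X>>%VS, forall x, sympl x y = 0}.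
Proof.
move=> Xy x /(@coord_span _ _ _ (in_tuple X)) ->.
rewrite symplE mulmx_suml summxE big1 // => i _.
by rewrite -scalemxAl mxE -symplE Xy ?mulr0 ?mem_nth.
Qed.

Lemma sympl_span (X Y : seq (vec n)) :
  {in X & Y, forall x y, sympl x y = 0} ->
  {in <<X>>%VS & <<Y>>%VS, forall x y, sympl x y = 0}.
Proof.
move=> XY x y xX yY; rewrite sympl_sym; apply: sympl_spanl yY => z zY.
by rewrite sympl_sym; apply: sympl_spanl xX => w wX; apply: XY.
Qed.

Definition perp_seq t : pred (vec n) := [pred x | all (fun y => sympl x y == 0) t].

Lemma card_perp_seq t : free t -> (#|perp_seq t| * 2 ^ size t = 2 ^ N)%N.
Proof.
move=> t_free; pose M := ((\matrix_(i < size t) t`_i) *m sympl_mx)^T.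
have -> : #|perp_seq t| = #|[pred x : vec n | x *m M == 0]|.
  have xM x i : (x *m M) 0 i = sympl x t`_i.
    rewrite symplE !mxE; apply: eq_bigr => k _; rewrite !mxE; congr (_ * _).
    by apply: eq_bigr => l _; rewrite !mxE.
  apply: eq_card => x; rewrite !inE; apply/(all_nthP 0)/eqP => [x_perp|xM0 i ti].
    by apply/rowP => i; rewrite xM mxE; apply/eqP/x_perp.
  by rewrite -(xM x (Ordinal ti)) xM0 mxE.
have rankM : \rank M = size t.
  by rewrite mxrank_tr mxrankMfree ?sympl_mx_free // (eqP (free_row_free t_free)).
by rewrite card_kermx card_Fp // rankM -expnD subnK // -rankM rank_leq_row.
Qed.

Lemma card_vspace2 (U : {vspace vec n}) : #|U| = (2 ^ \dim U)%N.
Proof. by rewrite card_vspace card_Fp. Qed.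

Lemma dim_vec : \dim (fullv : {vspace vec n}) = N.
Proof. by rewrite dimvf /dim /= mul1n. Qed.

Lemma card_vspaceD (U W : {vspace vec n}) :
  (W <= U)%VS -> #|[predD U & W]| = (2 ^ \dim U - 2 ^ \dim W)%N.
Proof.
move=> WU; rewrite -!card_vspace2 -(cardID W U).
rewrite (@eq_card _ [predI U & W] W) ?addKn // => x.
by rewrite !inE andb_idl // => xW; apply: (subvP WU); exact: xW.
Qed.

Lemma dim_le_vec (U : {vspace vec n}) : (\dim U <= N)%N.
Proof. by rewrite -[X in (_ <= X)%N]dim_vec dimvS ?subvf. Qed.

Definition vset (U : {vspace vec n}) : {set vec n} := [set x | x \in U].

Lemma spanS_vset U : spanS (vset U) = U.
Proof.
apply: subv_anti; apply/andP; split.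
  by apply/span_subvP => x; rewrite mem_enum inE.
by apply/subvP => x xU; apply: memv_span; rewrite mem_enum inE.
Qed.

Lemma vset_subspace U : is_subspace (vset U).
Proof. by rewrite /is_subspace spanS_vset. Qed.

Lemma sdim_vset U : sdim (vset U) = \dim U.
Proof. by rewrite /sdim spanS_vset. Qed.

Lemma subspaceE (V : {set vec n}) : is_subspace V -> V = vset (spanS V).
Proof. exact/eqP. Qed.

Lemma spanS_rad_sub (V : {set vec n}) : (spanS (Defs.rad V) <= spanS V)%VS.
Proof.
apply/span_subvP => y; rewrite mem_enum inE => /andP[yV _].
by apply: memv_span; rewrite mem_enum.
Qed.

Lemma sympl_rad (V : {set vec n}) :
  {in spanS V & spanS (Defs.rad V), forall x y, sympl x y = 0}.
Proof.
apply: sympl_span => x y; rewrite !mem_enum !inE => xV /andP[_ /forallP/(_ x)].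
by rewrite xV sympl_sym => /eqP.
Qed.

Lemma admissible_free (P : seq (vec n) -> vec n -> bool) s :
  (forall s x, P s x -> x \notin <<s>>%VS) -> admissible P s -> free s.
Proof.
move=> P_indep; elim: s => [|x s IH] /=; first by rewrite /free span_nil dimv0.
by case/andP => Psx adm_s; rewrite free_cons P_indep // IH.
Qed.

Section Adapted.
Variable W : nat -> {vspace vec n}.
Hypothesis W_mono : {homo W : i j / (i <= j)%N >-> (i <= j)%VS}.

Definition adapted s x := (x \notin <<s>>%VS) && (x \in W (size s)).

Lemma adapted_sub s : admissible adapted s -> {subset s <= W (size s).-1}.
Proof.
elim: s => [|x s IH] //= /andP[/andP[_ xW] adm_s] y.
rewrite inE => /orP[/eqP-> //|ys].
by apply: (subvP (W_mono (leq_pred _))); apply: IH.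
Qed.

Lemma size_adapted_lb m : (forall j, j < m -> j < \dim (W j))%N ->
  (\prod_(j < m) 2 ^ \dim (W j) <= size (admissibles adapted m) * 2 ^ m)%N.
Proof.
move=> dimW; have -> : (2 ^ m = \prod_(j < m) 2)%N by rewrite prod_nat_const card_ord.
apply: (@size_admissibles_lb _ _ (fun=> 2) (fun j => 2 ^ \dim (W j)))%N.
move=> j s lt_jm; rewrite mem_admissibles => /andP[adm_s /eqP size_s].
have s_free : free s by apply: admissible_free adm_s => ? ? /andP[].
have sW : (<<s>> <= W j)%VS.
  apply/span_subvP => y /(adapted_sub adm_s); rewrite size_s.
  exact/subvP/W_mono/leq_pred.
rewrite (@eq_card _ _ [predD W j & <<s>>%VS]); last first.
  by move=> x; rewrite !inE /adapted size_s andbC.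
rewrite card_vspaceD // (eqP s_free) size_s.
have := dimW j lt_jm; case: (\dim (W j)) => // d lt_jd.
have : (2 ^ j <= 2 ^ d)%N by rewrite leq_exp2l.
rewrite expnS; lia.
Qed.

End Adapted.

End SymplecticSpace.

Section Counting.
Variable n : nat.
Local Notation N := (n + n)%N.
Implicit Types (s : seq (vec n)) (V : {set vec n}).

Definition subspaces_big_rad m k : {set {set vec n}} :=
  [set V in subspaces_dim n m | k <= sdim (Defs.rad V)]%N.

Lemma span_fibre_ub (P : seq (vec n) -> vec n -> bool) m V :
  V \in subspaces_dim n m ->
  (count (fun s => vset <<s>> == V) (admissibles P m) <= 2 ^ (m * m))%N.
Proof.
rewrite inE => /andP[sV /eqP dimV].
pose inV : seq (vec n) -> vec n -> bool := fun _ x => x \in spanS V.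
rewrite -size_filter; apply: (@leq_trans (size (admissibles inV m))).
  apply: uniq_leq_size; first exact/filter_uniq/admissibles_uniq.
  move=> s; rewrite mem_filter !mem_admissibles => /andP[/eqP spanV /andP[_ ->]].
  rewrite andbT admissible_all; apply/allP => x xs.
  have : x \in vset <<s>> by rewrite inE memv_span.
  by rewrite spanV {1}(subspaceE sV) inE.
have := @size_admissibles_ub _ inV (fun=> 1) (fun=> 2 ^ m) m.
rewrite !prod_nat_const card_ord exp1n muln1 -expnM; apply=> j s _ _.
by rewrite mul1n -dimV -card_vspace2.
Qed.

Lemma card_subspaces_lb m : (m <= N)%N ->
  (2 ^ (m * N) <= #|subspaces_dim n m| * 2 ^ (m * m) * 2 ^ m)%N.
Proof.
move=> le_mN.
have := @size_adapted_lb n (fun=> fullv) (fun _ _ _ => subvv _) m.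
rewrite prod_nat_const card_ord dim_vec -expnM mulnC.
move/(_ (fun j lt_jm => leq_trans lt_jm le_mN))/leq_trans; apply.
rewrite leq_mul2r; apply/orP; right.
apply: (size_le_card_mul (f := fun s => vset <<s>>)) => [s|V]; last exact: span_fibre_ub.
rewrite mem_admissibles => /andP[adm_s /eqP size_s].
have /eqP s_free : free s by apply: admissible_free adm_s => ? ? /andP[].
by rewrite inE vset_subspace sdim_vset s_free size_s /=.
Qed.

(* [drop (size s - k) s] lists the (at most) [k] oldest entries of [s]. *)
Definition orth_step k s x :=
  (x \notin <<s>>%VS) && (x \in perp_seq (drop (size s - k) s)).

Lemma size_orth_admissibles_ub k m :
  (size (admissibles (orth_step k) m) * 2 ^ (\sum_(j < m) minn j k) <= 2 ^ (m * N))%N.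
Proof.
rewrite expn_sum; have -> : (2 ^ (m * N) = \prod_(j < m) 2 ^ N)%N.
  by rewrite prod_nat_const card_ord -expnM mulnC.
apply: (@size_admissibles_ub _ _ (fun j => 2 ^ minn j k) (fun=> 2 ^ N)).
move=> j s _; rewrite mem_admissibles => /andP[adm_s /eqP size_s].
set d := drop (size s - k) s.
have s_free : free s by apply: admissible_free adm_s => ? ? /andP[].
have d_free : free d.
  by apply: (@catr_free _ _ (take (size s - k) s)); rewrite cat_take_drop.
have size_d : size d = minn j k by rewrite size_drop size_s minnE.
rewrite -(card_perp_seq d_free) size_d mulnC leq_mul2r; apply/orP; right.
by apply: subset_leq_card; apply/subsetP => x; rewrite !inE => /andP[_].
Qed.

Section RadicalFlag.
Variables (k : nat) (V : {set vec n}).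

Definition rad_flag j := if (j < k)%N then spanS (Defs.rad V) else spanS V.

Lemma rad_flag_sub j : (rad_flag j <= spanS V)%VS.
Proof. by rewrite /rad_flag; case: ifP => _; [exact: spanS_rad_sub | exact: subvv]. Qed.

Lemma rad_flag_mono : {homo rad_flag : i j / (i <= j)%N >-> (i <= j)%VS}.
Proof.
move=> i j le_ij; rewrite [rad_flag j]/rad_flag.
case: (ltnP j k) => [lt_jk|_]; last exact: rad_flag_sub.
by rewrite /rad_flag (leq_ltn_trans le_ij lt_jk).
Qed.

Lemma adapted_orth_step s : admissible (adapted rad_flag) s -> admissible (orth_step k) s.
Proof.
apply: admissibleW => s' x adm_s' /andP[xs' x_flag]; rewrite /orth_step xs' /=.
apply/allP => y yd; apply/eqP/(sympl_rad (V := V)).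
  exact: subvP (rad_flag_sub _) _ x_flag.
set d := drop _ _ in yd.
have := adapted_sub rad_flag_mono (admissible_drop (size s' - k) adm_s') yd.
have d_gt0 : (0 < size d)%N by case: (d) yd.
by rewrite /rad_flag size_drop ifT //; move: d_gt0; rewrite size_drop; lia.
Qed.

End RadicalFlag.

Lemma big_rad_span_fibre_lb m k V : V \in subspaces_big_rad m k ->
  (2 ^ (\sum_(j < m) (if j < k then k else m)) <=
   count (fun s => vset <<s>> == V) (admissibles (orth_step k) m) * 2 ^ m)%N.
Proof.
rewrite !inE => /andP[/andP[sV /eqP dimV] k_rad]; rewrite /sdim in dimV k_rad.
apply: (@leq_trans (\prod_(j < m) 2 ^ \dim (rad_flag k V j))).
  rewrite expn_sum; apply: leq_prod => j _; rewrite leq_exp2l // /rad_flag.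
  by case: ifP => _; rewrite ?dimV.
apply: (leq_trans (size_adapted_lb (rad_flag_mono k V) _)).
  move=> j lt_jm; rewrite /rad_flag; case: ifP => [lt_jk|_].
    exact: leq_trans lt_jk k_rad.
  by rewrite dimV.
rewrite leq_mul2r -size_filter; apply/orP; right.
apply: uniq_leq_size; first exact: admissibles_uniq.
move=> s; rewrite mem_filter !mem_admissibles => /andP[adm_s /eqP size_s].
rewrite (adapted_orth_step adm_s) size_s eqxx !andbT.
have /eqP s_free : free s by apply: admissible_free adm_s => ? ? /andP[].
rewrite (subspaceE sV); apply/eqP; congr vset; apply/eqP.
rewrite eqEdim s_free size_s dimV leqnn andbT.
apply/span_subvP => y /(adapted_sub (rad_flag_mono k V) adm_s).
exact/subvP/rad_flag_sub.
Qed.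

Lemma sum_rad_flag_exponents k m : (k <= m)%N ->
  (\sum_(j < m) ((if j < k then k else m) + minn j k) = m * m + 'C(k, 2))%N.
Proof.
move=> /subnKC <-; set d := (m - k)%N; rewrite big_split_ord /=.
rewrite (eq_bigr (fun j : 'I_k => k + j)%N); last first.
  by move=> j _; rewrite ltn_ord (minn_idPl (ltnW (ltn_ord j))).
rewrite [X in (_ + X)%N](eq_bigr (fun=> k + d + k)%N); last first.
  by move=> i _; rewrite ltnNge leq_addr /= (minn_idPr (leq_addr _ _)).
rewrite big_split /= -(big_mkord xpredT (fun i => i)) bin2_sum !sum_nat_const !card_ord.
ring.
Qed.

Lemma card_big_rad_ub m k : k <= m ->
  #|subspaces_big_rad m k| * 2 ^ (m * m + 'C(k, 2)) <= 2 ^ (m * N) * 2 ^ m.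
Proof.
move=> le_km; rewrite -sum_rad_flag_exponents // big_split /= expnD mulnA.
apply: (@leq_trans (2 ^ m * size (admissibles (orth_step k) m)
                    * 2 ^ (\sum_(j < m) minn j k))).
  rewrite leq_mul2r; apply/orP; right.
  apply: (card_mul_le_size (f := fun s => vset <<s>>)) => V V_big.
  by rewrite mulnC big_rad_span_fibre_lb.
by rewrite -mulnA mulnC leq_mul2r size_orth_admissibles_ub orbT.
Qed.

Lemma card_big_rad_le m k :
  #|subspaces_big_rad m k| * 2 ^ 'C(k, 2) <= #|subspaces_dim n m| * 2 ^ (2 * m).
Proof.
have [->|] := posnP #|subspaces_big_rad m k|; first by [].
case/card_gt0P => V; rewrite !inE => /andP[/andP[_ /eqP dimV] k_rad].
have le_km : k <= m by rewrite -dimV (leq_trans k_rad) ?dimvS ?spanS_rad_sub.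
have le_mN : m <= N by rewrite -dimV dim_le_vec.
rewrite -(@leq_pmul2r (2 ^ (m * m))) ?expn_gt0 // -mulnA -expnD addnC.
apply: leq_trans (card_big_rad_ub le_km) _.
apply: leq_trans (leq_mul (card_subspaces_lb le_mN) (leqnn (2 ^ m))) _.
by rewrite -!mulnA -!expnD; apply: eq_leq; congr (_ * 2 ^ _); lia.
Qed.

End Counting.

Local Open Scope ring_scope.

Lemma natr_bin2 (R : comPzRingType) k : 'C(k, 2)%:R * 2 = k%:R * (k%:R - 1) :> R.
Proof.
elim: k => [|k IH]; first by rewrite bin0n !mul0r.
by rewrite binS bin1 natrD mulrDl IH -natr1; ring.
Qed.

Lemma ratio_le_powR (R : realType) (a b c d : nat) :
  (a * 2 ^ c <= b * 2 ^ d)%N -> a%:R / b%:R <= 2 `^ (d%:R - c%:R) :> R.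
Proof.
move=> le_ab; have [->|b_gt0] := posnP b; first by rewrite invr0 mulr0 powR_ge0.
rewrite powRB ?pnatr_eq0 ?implybT // !powR_mulrn // ler_pdivrMr ?ltr0n //.
rewrite mulrAC ler_pdivlMr ?exprn_gt0 //.
by rewrite [_ * b%:R]mulrC -!natrX -!natrM ler_nat.
Qed.

Lemma bin2_lb (R : realType) (eps : R) (n k : nat) : 0 < eps ->
  (6 * eps + 16) / eps ^+ 2 < n%:R -> eps * n%:R < k%:R + 1 ->
  4 * n%:R + eps ^+ 2 / 4 * n%:R ^+ 2 <= 'C(k, 2)%:R.
Proof.
move=> eps_gt0 n_large k_large.
have eps2_gt0 : 0 < eps ^+ 2 by rewrite exprn_gt0.
have {}n_large : 6 * eps + 16 < eps ^+ 2 * n%:R.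
  by rewrite [_ * n%:R]mulrC -ltr_pdivrMr.
have epsn_large : 6 < eps * n%:R.
  by rewrite -(ltr_pM2l eps_gt0) mulrA -expr2; lra.
have k_lb : (eps * n%:R - 1) * (eps * n%:R - 2) <= k%:R * (k%:R - 1).
  by apply: ler_pM; lra.
have slack : 0 <= n%:R * (eps ^+ 2 * n%:R - 6 * eps - 16).
  by apply: mulr_ge0 => //; lra.
(* (eps n - 1)(eps n - 2)/2 - 4n - (eps n)^2/4 = n (eps^2 n - 6 eps - 16)/4 + 1 *)
have := natr_bin2 R k; lra.
Qed.

Lemma prob_big_rad_le (R : realType) (eps : R) n m : 0 <= eps ->
  prob_big_rad eps n m <=
    2 `^ ((4 * n)%:R - 'C(Num.truncn (eps * n%:R), 2)%:R).
Proof.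
move=> eps_ge0; set k := Num.truncn (eps * n%:R).
apply: (@le_trans _ _ (#|subspaces_big_rad n m k|%:R / #|subspaces_dim n m|%:R)).
  rewrite ler_wpM2r ?invr_ge0 // ler_nat; apply/subset_leq_card/subsetP => V.
  rewrite !inE => /andP[-> big_rad] /=; rewrite -(ler_nat R).
  by apply: le_trans big_rad; rewrite truncn_le mulr_ge0.
have [lt_Nm|le_mN] := ltnP (n + n) m.
  rewrite (_ : #|subspaces_dim n m| = 0)%N ?invr0 ?mulr0 ?powR_ge0 //.
  apply: eq_card0 => V; rewrite inE; apply/negbTE/negP => /andP[_ /eqP dimV].
  by move: lt_Nm; rewrite -dimV ltnNge dim_le_vec.
apply: le_trans (ratio_le_powR _ (card_big_rad_le n m k)) _.
by apply: ler_powR; rewrite ?ler1n // lerB // ler_nat; lia.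
Qed.

Theorem lemmaD6 (R : realType) (eps alpha : R) :
  0 < eps -> 0 < alpha ->
  exists delta : R, 0 < delta /\
    exists N : nat, forall n : nat, (N <= n)%N ->
      forall m : nat, alpha * n%:R <= m%:R ->
        prob_big_rad eps n m <= powR 2 (- (delta * (n%:R ^+ 2))).
Proof.
move=> eps_gt0 _.
exists (eps ^+ 2 / 4); split; first by rewrite divr_gt0 ?exprn_gt0.
exists (Num.truncn ((6 * eps + 16) / eps ^+ 2)).+1 => n n_large m _.
apply: le_trans (prob_big_rad_le _ _ (ltW eps_gt0)) _.
apply: ler_powR; first by rewrite ler1n.
have n_gt : (6 * eps + 16) / eps ^+ 2 < n%:R.
  by apply: lt_le_trans (truncnS_gt _) _; rewrite ler_nat.
have k_gt : eps * n%:R < (Num.truncn (eps * n%:R))%:R + 1.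
  by rewrite natr1 truncnS_gt.
have := bin2_lb eps_gt0 n_gt k_gt; lra.
Qed.
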